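(* Fix $a\ge0$ and $0\le\alpha\le\beta$. There is a constant $M_a^{\alpha,\beta}>0$, independent of $n$, $x$ and $f$, such that for every $f\in C_\rho^k[0,\infty)$ and every integer $n\ge1$, $$\sup_{x\ge0}\frac{|T_{n,a}^{\alpha,\beta}(f;x)-f(x)|}{(1+x^2)^3}\le M_a^{\alpha,\beta}\,\Omega\!\left(f;(n+\beta)^{-1/2}\right).$$
   Context: Fix $a\ge 0$ and real numbers $\alpha,\beta$ with $0\le\alpha\le\beta$. For $n\in\mathbb N=\{1,2,\dots\}$ let $(n)_0=1$, $(n)_i=n(n+1)\cdots(n+i-1)$, and $p_k(n,a)=\sum_{i=0}^{k}\binom{k}{i}(n)_i a^{k-i}$. For $x\ge0$ and $k=0,1,2,\dots$ put $W_{n,k}^a(x)=e^{-\frac{ax}{1+x}}\frac{p_k(n,a)}{k!}\frac{x^k}{(1+x)^{k+n}}$ (so that $\sum_{k\ge0}W_{n,k}^a(x)=1$). The generalized Baskakov–Kantorovich–Stancu operator is $T_{n,a}^{\alpha,\beta}(f;x)=(n+\beta)\sum_{k=0}^{\infty}W_{n,k}^a(x)\int_{\frac{k+\alpha}{n+\beta}}^{\frac{k+\alpha+1}{n+\beta}}f(t)\,dt$. With the weight $\rho(x)=1+x^2$: $C_\rho[0,\infty)$ is the set of continuous $f$ on $[0,\infty)$ with $|f(x)|\le M_f\rho(x)$ for some constant $M_f$, and $C_\rho^k[0,\infty)$ is the set of $f\in C_\rho[0,\infty)$ for which $\lim_{x\to\infty}f(x)/\rho(x)$ exists and is finite. The weighted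 modulus of continuity (Ispir) is, for $\delta>0$, $\Omega(f;\delta)=\sup\left\{\frac{|f(x+h)-f(x)|}{(1+h^2)(1+x^2)}: x\ge0,\ |h|\le\delta,\ x+h\ge0\right\}$. *)

From Stdlib Require Import Reals Lra Lia ClassicalEpsilon Arith Factorial Binomial.
Open Scope R_scope.

Fixpoint poch (x : R) (i : nat) : R :=
  match i with
  | O => 1
  | S j => poch x j * (x + INR j)
  end.

Definition pk (k n : nat) (a : R) : R :=
  sum_f_R0 (fun i => C k i * poch (INR n) i * a ^ (k - i)) k.

Definition W (n k : nat) (a x : R) : R :=
  exp (- (a * x / (1 + x))) * (pk k n a / INR (fact k))
  * (x ^ k / (1 + x) ^ (k + n)).

(* Riemann integral of f on [lo,hi] (the value of RiemannInt for any
   integrability proof; chosen by epsilon, meaningful when f is integrable). *)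
Definition Rint (f : R -> R) (lo hi : R) : R :=
  epsilon (inhabits 0)
    (fun I => exists pr : Riemann_integrable f lo hi, RiemannInt pr = I).

Definition series_sum (u : nat -> R) : R :=
  epsilon (inhabits 0) (fun l => infinite_sum u l).

Definition T (n : nat) (a alpha beta : R) (f : R -> R) (x : R) : R :=
  (INR n + beta) *
  series_sum (fun k =>
    W n k a x *
    Rint f ((INR k + alpha) / (INR n + beta))
           ((INR k + alpha + 1) / (INR n + beta))).

Definition rho (x : R) : R := 1 + x ^ 2.

Definition cont_on_nonneg (f : R -> R) : Prop :=
  forall x, 0 <= x -> limit1_in f (fun y => 0 <= y) (f x) x.

Definition C_rho (f : R -> R) : Prop :=
  cont_on_nonneg f /\ exists Mf, forall x, 0 <= x -> Rabs (f x) <= Mf * rho x.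

Definition C_rho_k (f : R -> R) : Prop :=
  C_rho f /\ exists L, forall eps, eps > 0 ->
    exists A, forall x, x >= A -> 0 <= x -> Rabs (f x / rho x - L) < eps.

Definition Omega_set (f : R -> R) (delta : R) (r : R) : Prop :=
  exists x h, 0 <= x /\ Rabs h <= delta /\ 0 <= x + h /\
    r = Rabs (f (x + h) - f x) / ((1 + h ^ 2) * (1 + x ^ 2)).

Definition Omega (f : R -> R) (delta : R) : R :=
  epsilon (inhabits 0) (fun s => is_lub (Omega_set f delta) s).

(** The kernel [W n k a x] is the convolution of the Baskakov (negative binomial)
    weights of order [n] at [y = x / (1 + x)] with the Poisson weights of mean
    [a y]; both have explicit factorial moments, hence explicit central moments
    of orders 2 and 4.  Subdividing [x, t] into at most [2 + (n + beta) (t - x)^2]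
    steps of length [1 / sqrt (n + beta)] bounds [|f t - f x|] by
    [4 (1 + x^2) Omega (2 + (n + beta) (t - x)^2) (1 + (t - x)^2)].  On the k-th
    Kantorovich interval, writing [(n + beta) (t - x) = (i - n x) + (k - i) + r]
    with [|r| <= alpha + 1 + beta x] turns this weight into a sum of second and
    fourth central moments of the two factors, each [O((1 + x^2)^2)] uniformly in [n]. *)

From Stdlib Require Import Reals Lra Lia ZArith Factorial Binomial ClassicalEpsilon.
From Coquelicot Require Import Coquelicot.
Open Scope R_scope.

Lemma is_series_Rmult_l (c : R) (u : nat -> R) (l : R) :
  is_series u l -> is_series (fun k => c * u k) (c * l).
Proof. exact (is_series_scal_l c u l). Qed.

Lemma is_series_Rplus (u v : nat -> R) (lu lv : R) :
  is_series u lu -> is_series v lv -> is_series (fun k => u k + v k) (lu + lv).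
Proof. exact (is_series_plus u v lu lv). Qed.

Lemma is_series_ext_eq (u v : nat -> R) (l l' : R) :
  (forall k, u k = v k) -> l = l' -> is_series u l -> is_series v l'.
Proof. intros Huv <-. exact (is_series_ext u v l Huv). Qed.

Lemma is_series_head0 (u : nat -> R) (l : R) :
  u 0%nat = 0 -> is_series (fun k => u (S k)) l -> is_series u l.
Proof.
  intros Hu0 Hu. apply is_series_decr_1.
  change (plus l (opp (u 0%nat))) with (l + - u 0%nat).
  rewrite Hu0, Ropp_0, Rplus_0_r. exact Hu.
Qed.

Ltac pos_nonzero :=
  repeat split; try apply Rgt_not_eq;
  try apply INR_fact_lt_0; try apply pow_lt; try lra.

Lemma poch_S_shift (z : R) (i : nat) : poch z (S i) = z * poch (z + 1) i.
Proof.
  induction i as [|i IH]; [simpl; ring|].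
  change (poch z (S (S i))) with (poch z (S i) * (z + INR (S i))).
  rewrite IH. simpl poch. rewrite S_INR. ring.
Qed.

Lemma poch_1 (i : nat) : poch 1 i = INR (fact i).
Proof.
  induction i as [|i IH]; [reflexivity|].
  simpl poch. rewrite IH. change (fact (S i)) with (S i * fact i)%nat.
  rewrite mult_INR, S_INR. ring.
Qed.

Lemma poch_nonneg (z : R) (i : nat) : 0 <= z -> 0 <= poch z i.
Proof.
  intro Hz. induction i; simpl; [lra|].
  apply Rmult_le_pos; [exact IHi|]. pose proof (pos_INR i); lra.
Qed.

Lemma poch_hockey_stick (m i : nat) :
  poch (INR (S m)) i / INR (fact i) =
  sum_f_R0 (fun j => poch (INR m) j / INR (fact j)) i.
Proof.
  induction i as [|i IH]; [simpl; field|].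
  rewrite tech5, <- IH, (poch_S_shift (INR m) i), <- S_INR.
  change (poch (INR (S m)) (S i)) with (poch (INR (S m)) i * (INR (S m) + INR i)).
  change (fact (S i)) with (S i * fact i)%nat.
  rewrite mult_INR, !S_INR.
  pose proof (INR_fact_lt_0 i). pose proof (pos_INR i).
  field. lra.
Qed.

Definition baskakov_ratio (x : R) : R := x / (1 + x).

(* Negative binomial weights; [nb_weight n x k = W n k 0 x]. *)
Definition nb_weight (m : nat) (x : R) (i : nat) : R :=
  / (1 + x) ^ m * (poch (INR m) i / INR (fact i)) * baskakov_ratio x ^ i.

Definition poisson_weight (l : R) (j : nat) : R :=
  exp (- l) * (l ^ j / INR (fact j)).

Fixpoint falling (r : nat) (t : R) : R :=
  match r with O => 1 | S r' => t * falling r' (t - 1) end.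

Lemma baskakov_ratio_bounds (x : R) : 0 <= x -> 0 <= baskakov_ratio x < 1.
Proof.
  intro Hx. unfold baskakov_ratio. split.
  - apply Rdiv_le_0_compat; lra.
  - apply Rmult_lt_reg_r with (1 + x); [lra|]. field_simplify; lra.
Qed.

Lemma nb_weight_nonneg (m : nat) (x : R) (i : nat) : 0 <= x -> 0 <= nb_weight m x i.
Proof.
  intro Hx. unfold nb_weight. pose proof (baskakov_ratio_bounds x Hx).
  repeat apply Rmult_le_pos.
  - left; apply Rinv_0_lt_compat, pow_lt; lra.
  - apply poch_nonneg, pos_INR.
  - left; apply Rinv_0_lt_compat, INR_fact_lt_0.
  - apply pow_le; lra.
Qed.

Lemma poisson_weight_nonneg (l : R) (j : nat) : 0 <= l -> 0 <= poisson_weight l j.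
Proof.
  intro Hl. unfold poisson_weight. apply Rmult_le_pos; [left; apply exp_pos|].
  apply Rmult_le_pos; [apply pow_le; lra|].
  left; apply Rinv_0_lt_compat, INR_fact_lt_0.
Qed.

Lemma geometric_weight_series (x : R) : 0 <= x ->
  is_series (fun i => / (1 + x) * baskakov_ratio x ^ i) 1.
Proof.
  intro Hx. pose proof (baskakov_ratio_bounds x Hx).
  eapply is_series_ext_eq;
    [intro; reflexivity | | apply is_series_Rmult_l, is_series_geom].
  - unfold baskakov_ratio. field. lra.
  - rewrite Rabs_pos_eq; lra.
Qed.

(* The weights of order m + 1 are the Cauchy product of those of order m with
   the geometric weights, by the hockey-stick identity. *)
Lemma nb_weight_series (m : nat) (x : R) : 0 <= x -> (1 <= m)%nat ->
  is_series (nb_weight m x) 1.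
Proof.
  intros Hx Hm. pose proof (geometric_weight_series x Hx) as Hg.
  pose proof (baskakov_ratio_bounds x Hx).
  induction Hm as [|m Hm IH].
  - refine (is_series_ext_eq _ _ 1 1 _ eq_refl Hg). intro i. unfold nb_weight. simpl INR. rewrite poch_1. field. pos_nonzero.
  - assert (Hgp : forall i, 0 <= / (1 + x) * baskakov_ratio x ^ i).
    { intro i. apply Rmult_le_pos; [left; apply Rinv_0_lt_compat; lra|].
      apply pow_le; lra. }
    pose proof (is_series_mult_pos _ _ _ _ IH Hg
                  (fun i => nb_weight_nonneg m x i Hx) Hgp) as HM.
    refine (is_series_ext_eq _ _ _ _ _ (Rmult_1_l 1) HM). intro i. unfold nb_weight. rewrite (poch_hockey_stick m i).
    rewrite (sum_eq _ (fun j => poch (INR m) j / INR (fact j)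
                                * (/ (1 + x) ^ S m * baskakov_ratio x ^ i))).
    + rewrite <- scal_sum. simpl pow. ring.
    + intros j Hj.
      replace (baskakov_ratio x ^ i)
        with (baskakov_ratio x ^ j * baskakov_ratio x ^ (i - j))
        by (rewrite <- pow_add; f_equal; lia).
      simpl pow. field. pos_nonzero.
Qed.

Lemma nb_weight_shift (m : nat) (x : R) (i : nat) : 0 <= x ->
  nb_weight m x (S i) * INR (S i) = INR m * x * nb_weight (S m) x i.
Proof.
  intro Hx. unfold nb_weight, baskakov_ratio. rewrite poch_S_shift, <- S_INR.
  change (fact (S i)) with (S i * fact i)%nat. rewrite mult_INR.
  simpl pow. rewrite !S_INR. pose proof (pos_INR i).
  field. pos_nonzero.
Qed.

Lemma nb_factorial_moment (x : R) (r m : nat) : 0 <= x -> (1 <= m)%nat ->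
  is_series (fun i => nb_weight m x i * falling r (INR i)) (poch (INR m) r * x ^ r).
Proof.
  intro Hx. revert m. induction r as [|r IH]; intros m Hm.
  - refine (is_series_ext_eq _ _ _ _ _ _ (nb_weight_series m x Hx Hm)).
    + intro; simpl; ring.
    + simpl; ring.
  - apply is_series_head0; [simpl; ring|].
    refine (is_series_ext_eq _ _ _ _ _ _
              (is_series_Rmult_l (INR m * x) _ _ (IH (S m) ltac:(lia)))).
    + intro i. change (falling (S r) (INR (S i)))
        with (INR (S i) * falling r (INR (S i) - 1)).
      replace (INR (S i) - 1) with (INR i) by (rewrite S_INR; ring).
      transitivity (INR m * x * nb_weight (S m) x i * falling r (INR i)); [ring|].
      rewrite <- (nb_weight_shift m x i Hx). ring.
    + rewrite poch_S_shift, S_INR. simpl pow. ring.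
Qed.

Lemma poisson_weight_series (l : R) : is_series (poisson_weight l) 1.
Proof.
  assert (H : exp_in l (exp l)).
  { unfold exp. destruct (exist_exp l) as [v Hv]. exact Hv. }
  apply is_series_Reals in H.
  refine (is_series_ext_eq _ _ _ _ _ _ (is_series_Rmult_l (exp (- l)) _ _ H)).
  - intro i; unfold poisson_weight; field; pos_nonzero.
  - rewrite exp_Ropp. field. apply Rgt_not_eq, exp_pos.
Qed.

Lemma poisson_weight_shift (l : R) (j : nat) :
  poisson_weight l (S j) * INR (S j) = l * poisson_weight l j.
Proof.
  unfold poisson_weight. change (fact (S j)) with (S j * fact j)%nat.
  rewrite mult_INR. simpl pow. rewrite !S_INR. pose proof (pos_INR j).
  field. pos_nonzero.
Qed.

Lemma poisson_factorial_moment (l : R) (r : nat) :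
  is_series (fun j => poisson_weight l j * falling r (INR j)) (l ^ r).
Proof.
  induction r as [|r IH].
  - refine (is_series_ext_eq _ _ _ _ _ eq_refl (poisson_weight_series l)).
    intro; simpl; ring.
  - apply is_series_head0; [simpl; ring|].
    refine (is_series_ext_eq _ _ _ _ _ eq_refl (is_series_Rmult_l l _ _ IH)).
    intro i. change (falling (S r) (INR (S i)))
      with (INR (S i) * falling r (INR (S i) - 1)).
    replace (INR (S i) - 1) with (INR i) by (rewrite S_INR; ring).
    transitivity (l * poisson_weight l i * falling r (INR i)); [ring|].
    rewrite <- poisson_weight_shift. ring.
Qed.

(* Any polynomial of degree at most 4 is a combination of the first five falling factorials. *)
Lemma is_series_falling_comb (w : nat -> R) (L : nat -> R) (c0 c1 c2 c3 c4 : R) :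
  (forall r, is_series (fun i => w i * falling r (INR i)) (L r)) ->
  is_series (fun i => w i * (c0 + c1 * falling 1 (INR i) + c2 * falling 2 (INR i)
                             + c3 * falling 3 (INR i) + c4 * falling 4 (INR i)))
    (c0 * L 0%nat + c1 * L 1%nat + c2 * L 2%nat + c3 * L 3%nat + c4 * L 4%nat).
Proof.
  intro HL.
  refine (is_series_ext_eq (fun i => c0 * (w i * falling 0 (INR i))
     + c1 * (w i * falling 1 (INR i)) + c2 * (w i * falling 2 (INR i))
     + c3 * (w i * falling 3 (INR i)) + c4 * (w i * falling 4 (INR i)))
     _ _ _ _ eq_refl _).
  - intro; simpl; ring.
  - repeat apply is_series_Rplus; apply is_series_Rmult_l, HL.
Qed.

Definition nb_central_moment4 (n x : R) : R :=
  3 * n ^ 2 * x ^ 2 * (1 + x) ^ 2 + n * x * (1 + x) * (1 + 6 * x + 6 * x ^ 2).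

Lemma nb_central_moments (n : nat) (x : R) : 0 <= x -> (1 <= n)%nat ->
  is_series (fun i => nb_weight n x i * (INR i - INR n * x) ^ 2) (INR n * x * (1 + x)) /\
  is_series (fun i => nb_weight n x i * (INR i - INR n * x) ^ 4)
    (nb_central_moment4 (INR n) x).
Proof.
  intros Hx Hn.
  pose proof (fun r => nb_factorial_moment x r n Hx Hn) as HM.
  set (c := INR n * x).
  split.
  - refine (is_series_ext_eq _ _ _ _ _ _
              (is_series_falling_comb _ _ (c ^ 2) (1 - 2 * c) 1 0 0 HM)).
    + intro i; simpl falling; ring.
    + unfold c; simpl poch; ring.
  - refine (is_series_ext_eq _ _ _ _ _ _
              (is_series_falling_comb _ _ (c ^ 4) (1 - 4 * c + 6 * c ^ 2 - 4 * c ^ 3)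
                 (7 - 12 * c + 6 * c ^ 2) (6 - 4 * c) 1 HM)).
    + intro i; simpl falling; ring.
    + unfold c, nb_central_moment4; simpl poch; ring.
Qed.

Lemma poisson_moments (l : R) :
  is_series (fun j => poisson_weight l j * INR j ^ 2) (l ^ 2 + l) /\
  is_series (fun j => poisson_weight l j * INR j ^ 4)
    (l ^ 4 + 6 * l ^ 3 + 7 * l ^ 2 + l).
Proof.
  pose proof (poisson_factorial_moment l) as HM.
  split.
  - refine (is_series_ext_eq _ _ _ _ _ _ (is_series_falling_comb _ _ 0 1 1 0 0 HM)).
    + intro i; simpl falling; ring.
    + ring.
  - refine (is_series_ext_eq _ _ _ _ _ _ (is_series_falling_comb _ _ 0 1 7 6 1 HM)).
    + intro i; simpl falling; ring.
    + ring.
Qed.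

Lemma W_convolution (n k : nat) (a x : R) : 0 <= x ->
  W n k a x = sum_f_R0 (fun i => nb_weight n x i
                                 * poisson_weight (a * baskakov_ratio x) (k - i)) k.
Proof.
  intro Hx. unfold W, pk.
  set (y := baskakov_ratio x).
  replace (a * x / (1 + x)) with (a * y) by (unfold y, baskakov_ratio; field; lra).
  replace (x ^ k) with (y ^ k * (1 + x) ^ k)
    by (rewrite <- Rpow_mult_distr; f_equal; unfold y, baskakov_ratio; field; lra).
  transitivity (exp (- (a * y)) / INR (fact k) * (y ^ k / (1 + x) ^ n) *
                sum_f_R0 (fun i => Binomial.C k i * poch (INR n) i * a ^ (k - i)) k).
  { rewrite pow_add. field. pos_nonzero. }
  rewrite scal_sum. apply sum_eq. intros i Hi.
  unfold nb_weight, poisson_weight, Binomial.C. fold y.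
  replace (y ^ k) with (y ^ i * y ^ (k - i)) by (rewrite <- pow_add; f_equal; lia).
  rewrite Rpow_mult_distr. field. pos_nonzero.
Qed.

Lemma W_series (n : nat) (a x : R) : 0 <= x -> 0 <= a -> (1 <= n)%nat ->
  is_series (fun k => W n k a x) 1.
Proof.
  intros Hx Ha Hn.
  assert (Hl : 0 <= a * baskakov_ratio x)
    by (apply Rmult_le_pos; [exact Ha | apply baskakov_ratio_bounds, Hx]).
  refine (is_series_ext_eq _ _ _ _ _ (Rmult_1_l 1)
            (is_series_mult_pos _ _ _ _ (nb_weight_series n x Hx Hn)
               (poisson_weight_series (a * baskakov_ratio x))
               (fun i => nb_weight_nonneg n x i Hx)
               (fun j => poisson_weight_nonneg _ j Hl))).
  intro k. symmetry. apply W_convolution, Hx.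
Qed.

Lemma is_series_convolution_split (u v A B : nat -> R) (c EA EB : R) :
  (forall i, 0 <= u i) -> (forall j, 0 <= v j) ->
  (forall i, 0 <= A i) -> (forall j, 0 <= B j) ->
  is_series u 1 -> is_series v 1 ->
  is_series (fun i => u i * A i) EA -> is_series (fun j => v j * B j) EB ->
  is_series (fun k => sum_f_R0 (fun i => u i * v (k - i)%nat
                                       * (c + A i + B (k - i)%nat)) k)
    (c + EA + EB).
Proof.
  intros Hu Hv HA HB Su Sv SA SB.
  assert (HuA : forall i, 0 <= u i * A i) by (intro; apply Rmult_le_pos; auto).
  assert (HvB : forall j, 0 <= v j * B j) by (intro; apply Rmult_le_pos; auto).
  pose proof (is_series_mult_pos _ _ _ _ Su Sv Hu Hv) as M1.
  pose proof (is_series_mult_pos _ _ _ _ SA Sv HuA Hv) as M2.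
  pose proof (is_series_mult_pos _ _ _ _ Su SB Hu HvB) as M3.
  refine (is_series_ext_eq _ _ _ _ _ _
            (is_series_Rplus _ _ _ _
               (is_series_Rplus _ _ _ _ (is_series_Rmult_l c _ _ M1) M2) M3)).
  - intro k. rewrite scal_sum, <- !sum_plus. apply sum_eq. intros; ring.
  - ring.
Qed.

Lemma Omega_is_lub (f : R -> R) (d : R) :
  C_rho f -> 0 < d -> is_lub (Omega_set f d) (Omega f d).
Proof.
  intros [_ [Mf HM]] Hd.
  assert (Hbound : bound (Omega_set f d)).
  { exists (3 * Rabs Mf). intros r [z [h [Hz [Hh [Hzh ->]]]]].
    pose proof (HM _ Hzh) as H1. pose proof (HM _ Hz) as H2. unfold rho in *.
    assert (HD : 0 < (1 + h ^ 2) * (1 + z ^ 2)) by (apply Rmult_lt_0_compat; nra).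
    apply Rmult_le_reg_r with ((1 + h ^ 2) * (1 + z ^ 2)); [exact HD|].
    unfold Rdiv. rewrite Rmult_assoc, Rinv_l, Rmult_1_r by lra.
    assert (E1 : Rabs (f (z + h)) <= Rabs Mf * (2 * (1 + h ^ 2) * (1 + z ^ 2))).
    { apply Rle_trans with (Rabs Mf * (1 + (z + h) ^ 2)).
      - eapply Rle_trans; [exact H1|].
        apply Rmult_le_compat_r; [pose proof (pow2_ge_0 (z + h)); lra | apply Rle_abs].
      - apply Rmult_le_compat_l; [apply Rabs_pos|].
        pose proof (pow2_ge_0 (z - h)). pose proof (pow2_ge_0 (h * z)). nra. }
    assert (E2 : Rabs (f z) <= Rabs Mf * ((1 + h ^ 2) * (1 + z ^ 2))).
    { apply Rle_trans with (Rabs Mf * (1 + z ^ 2)).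
      - eapply Rle_trans; [exact H2|].
        apply Rmult_le_compat_r; [pose proof (pow2_ge_0 z); lra | apply Rle_abs].
      - apply Rmult_le_compat_l; [apply Rabs_pos|].
        pose proof (pow2_ge_0 h). pose proof (pow2_ge_0 z). nra. }
    unfold Rminus. eapply Rle_trans; [apply Rabs_triang|]. rewrite Rabs_Ropp. nra. }
  assert (Hne : exists r, Omega_set f d r).
  { exists 0, 0, 0. rewrite Rabs_R0, Rplus_0_r, Rminus_diag, Rabs_R0.
    repeat split; lra. }
  destruct (completeness _ Hbound Hne) as [s Hs].
  unfold Omega. apply epsilon_spec. exists s; exact Hs.
Qed.

Lemma Omega_bound (f : R -> R) (d z h : R) :
  C_rho f -> 0 < d -> 0 <= z -> Rabs h <= d -> 0 <= z + h ->
  Rabs (f (z + h) - f z) <= (1 + h ^ 2) * (1 + z ^ 2) * Omega f d.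
Proof.
  intros Hf Hd Hz Hh Hzh.
  assert (HD : 0 < (1 + h ^ 2) * (1 + z ^ 2)) by (apply Rmult_lt_0_compat; nra).
  assert (Hel : Rabs (f (z + h) - f z) / ((1 + h ^ 2) * (1 + z ^ 2)) <= Omega f d)
    by (apply (Omega_is_lub f d Hf Hd); exists z, h; auto).
  set (D := (1 + h ^ 2) * (1 + z ^ 2)) in *.
  replace (Rabs (f (z + h) - f z)) with (D * (Rabs (f (z + h) - f z) / D))
    by (field; lra).
  apply Rmult_le_compat_l; lra.
Qed.

Lemma Omega_nonneg (f : R -> R) (d : R) : C_rho f -> 0 < d -> 0 <= Omega f d.
Proof.
  intros Hf Hd. pose proof (Omega_bound f d 0 0 Hf Hd) as H.
  rewrite Rplus_0_r, Rminus_diag, !Rabs_R0 in H.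
  assert (0 <= (1 + 0 ^ 2) * (1 + 0 ^ 2) * Omega f d) by (apply H; lra).
  simpl in *. lra.
Qed.

Lemma telescope_bound (g : R -> R) (x s K : R) (m : nat) :
  (forall j, (j < m)%nat -> Rabs (g (x + INR (S j) * s) - g (x + INR j * s)) <= K) ->
  forall j, (j <= m)%nat -> Rabs (g (x + INR j * s) - g x) <= INR j * K.
Proof.
  intros Hs j. induction j as [|j IH]; intro Hj.
  - simpl. rewrite Rmult_0_l, Rplus_0_r, Rminus_diag, Rabs_R0. lra.
  - specialize (IH ltac:(lia)). specialize (Hs j ltac:(lia)).
    replace (g (x + INR (S j) * s) - g x) with
      ((g (x + INR (S j) * s) - g (x + INR j * s)) + (g (x + INR j * s) - g x)) by ring.
    eapply Rle_trans; [apply Rabs_triang|]. rewrite S_INR in *. lra.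
Qed.

Lemma segment_weight_bound (x h tau : R) : 0 <= tau <= 1 ->
  1 + (x + tau * h) ^ 2 <= 2 * (1 + x ^ 2) * (1 + h ^ 2).
Proof.
  intro Ht.
  assert ((tau * h) ^ 2 <= h ^ 2).
  { rewrite Rpow_mult_distr. pose proof (pow2_ge_0 h).
    assert (tau ^ 2 <= 1) by nra. nra. }
  pose proof (pow2_ge_0 (x - tau * h)). pose proof (pow2_ge_0 (x * h)). nra.
Qed.

Lemma Omega_step_bound (f : R -> R) (d x h tau s : R) :
  C_rho f -> 0 < d <= 1 -> 0 <= tau <= 1 -> Rabs s <= d ->
  0 <= x + tau * h -> 0 <= x + tau * h + s ->
  Rabs (f (x + tau * h + s) - f (x + tau * h))
    <= 4 * (1 + x ^ 2) * (1 + h ^ 2) * Omega f d.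
Proof.
  intros Hf Hd Htau Hs Hz Hzs.
  pose proof (Omega_nonneg f d Hf (proj1 Hd)).
  eapply Rle_trans; [apply (Omega_bound f d); auto; lra|].
  assert (Hs2 : 1 + s ^ 2 <= 2).
  { pose proof (Rabs_pos s). rewrite <- (pow2_abs s). nra. }
  pose proof (segment_weight_bound x h tau Htau).
  apply Rmult_le_compat_r; [lra|].
  replace (4 * (1 + x ^ 2) * (1 + h ^ 2)) with (2 * (2 * (1 + x ^ 2) * (1 + h ^ 2))) by ring.
  apply Rmult_le_compat; nra.
Qed.

Lemma nat_ceiling_pos (r : R) : 0 <= r ->
  exists m : nat, (0 < m)%nat /\ r < INR m <= r + 1.
Proof.
  intro Hr. destruct (archimed r) as [Hu1 Hu2].
  assert (Hz : (0 < up r)%Z) by (apply lt_0_IZR; lra).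
  exists (Z.to_nat (up r)).
  rewrite INR_IZR_INZ, Z2Nat.id by lia.
  split; [lia | lra].
Qed.

Lemma ratio_unit_interval (j m : nat) : (0 < m)%nat -> (j <= m)%nat ->
  0 <= INR j / INR m <= 1.
Proof.
  intros Hm Hj. apply lt_INR in Hm. apply le_INR in Hj. simpl in Hm.
  split; [apply Rdiv_le_0_compat; [apply pos_INR | lra]|].
  apply Rmult_le_reg_r with (INR m); [lra|]. field_simplify; lra.
Qed.

Lemma subdivision_step_small (h sq : R) (m : nat) :
  0 < sq -> 0 < INR m -> Rabs h * sq < INR m -> Rabs (h / INR m) <= / sq.
Proof.
  intros Hsq Hm Hr. rewrite Rabs_div, (Rabs_pos_eq (INR m)) by lra.
  apply Rmult_le_reg_r with (INR m * sq); [nra|].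
  replace (Rabs h / INR m * (INR m * sq)) with (Rabs h * sq) by (field; lra).
  replace (/ sq * (INR m * sq)) with (INR m) by (field; lra). lra.
Qed.

Lemma subdivision_point_nonneg (x t : R) (j m : nat) :
  0 <= x -> 0 <= t -> (0 < m)%nat -> (j <= m)%nat ->
  0 <= x + INR j * ((t - x) / INR m).
Proof.
  intros Hx Ht Hm Hj. pose proof (ratio_unit_interval j m Hm Hj).
  apply lt_INR in Hm. simpl in Hm.
  replace (x + INR j * ((t - x) / INR m)) with ((1 - INR j / INR m) * x + INR j / INR m * t)
    by (field; lra).
  nra.
Qed.

Lemma modulus_bound (f : R -> R) (np x t : R) :
  C_rho f -> 1 <= np -> 0 <= x -> 0 <= t ->
  Rabs (f t - f x) <= 4 * (1 + x ^ 2) * Omega f (/ sqrt np)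
                      * (2 + np * (t - x) ^ 2) * (1 + (t - x) ^ 2).
Proof.
  intros Hf Hn Hx Ht.
  set (sq := sqrt np).
  assert (Hsq : 0 < sq) by (apply sqrt_lt_R0; lra).
  assert (Hsq2 : sq * sq = np) by (apply sqrt_sqrt; lra).
  assert (Hsq1 : 1 <= sq) by nra.
  set (d := / sq).
  assert (Hd : 0 < d <= 1).
  { split; [apply Rinv_0_lt_compat, Hsq|].
    unfold d. rewrite <- Rinv_1. apply Rinv_le_contravar; lra. }
  set (h := t - x).
  destruct (nat_ceiling_pos (Rabs h * sq)) as [m [Hm [Hr1 Hr2]]].
  { apply Rmult_le_pos; [apply Rabs_pos | lra]. }
  pose proof (lt_INR _ _ Hm) as HmR. simpl in HmR.
  set (s := h / INR m).
  set (K := 4 * (1 + x ^ 2) * (1 + h ^ 2) * Omega f d).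
  assert (Hs : Rabs s <= d) by (apply subdivision_step_small; lra).
  assert (Hpoint : forall j, (j <= m)%nat -> 0 <= x + INR j * s)
    by (intros j Hj; apply subdivision_point_nonneg; auto).
  assert (Hstep : forall j, (j < m)%nat ->
            Rabs (f (x + INR (S j) * s) - f (x + INR j * s)) <= K).
  { intros j Hj.
    pose proof (ratio_unit_interval j m Hm ltac:(lia)) as Htau.
    assert (Ejs : INR j * s = INR j / INR m * h) by (unfold s; field; lra).
    replace (x + INR (S j) * s) with (x + INR j / INR m * h + s)
      by (rewrite S_INR, <- Ejs; ring).
    rewrite Ejs.
    apply Omega_step_bound; auto.
    - rewrite <- Ejs. apply Hpoint. lia.
    - replace (x + INR j / INR m * h + s) with (x + INR (S j) * s)
        by (rewrite S_INR, <- Ejs; ring).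
      apply Hpoint. lia. }
  pose proof (telescope_bound f x s K m Hstep m (le_n m)) as Htel.
  replace (x + INR m * s) with t in Htel by (unfold s, h; field; lra).
  assert (HK : 0 <= K).
  { pose proof (Omega_nonneg f d Hf (proj1 Hd)). pose proof (pow2_ge_0 x).
    pose proof (pow2_ge_0 h). unfold K. repeat apply Rmult_le_pos; lra. }
  assert (Hmr : INR m <= 2 + np * h ^ 2).
  { assert (Rabs h * sq * (Rabs h * sq) = np * h ^ 2).
    { rewrite <- Hsq2, <- (pow2_abs h). ring. }
    nra. }
  fold h d.
  apply Rle_trans with (INR m * K); [exact Htel|].
  replace (4 * (1 + x ^ 2) * Omega f d * (2 + np * h ^ 2) * (1 + h ^ 2))
    with ((2 + np * h ^ 2) * K) by (unfold K; ring).
  apply Rmult_le_compat_r; assumption.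
Qed.

Lemma C_rho_Riemann_integrable (f : R -> R) (lo hi : R) :
  C_rho f -> 0 <= lo -> lo <= hi -> Riemann_integrable f lo hi.
Proof.
  intros [Hc _] Hlo Hlh.
  set (g := fun t => f (Rmax 0 t)).
  assert (Hg : Riemann_integrable g lo hi).
  { apply continuity_implies_RiemannInt; [exact Hlh|].
    intros z [Hz1 Hz2] eps Heps.
    destruct (Hc z ltac:(lra) eps Heps) as [alp [Halp H]].
    exists alp. split; [exact Halp|]. intros y [_ Hy].
    simpl in *. unfold Rdist in *.
    unfold g. rewrite (Rmax_right 0 z) by lra.
    apply H. split; [apply Rmax_l|].
    unfold Rmax. destruct (Rle_dec 0 y); [exact Hy|].
    eapply Rle_lt_trans; [|exact Hy]. rewrite !Rabs_left1 by lra. lra. }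
  apply Riemann_integrable_ext with g; [|exact Hg].
  intros t Ht. unfold g. rewrite Rmin_left in Ht by lra. rewrite Rmax_right; lra.
Qed.

Lemma Rint_RiemannInt (f : R -> R) (lo hi : R) (pr : Riemann_integrable f lo hi) :
  Rint f lo hi = RiemannInt pr.
Proof.
  unfold Rint.
  destruct (epsilon_spec (inhabits 0)
    (fun I => exists pr : Riemann_integrable f lo hi, RiemannInt pr = I)) as [pr0 H0].
  - exists (RiemannInt pr), pr; reflexivity.
  - rewrite <- H0. apply RiemannInt_P5.
Qed.

Lemma series_sum_unique (u : nat -> R) (l : R) : infinite_sum u l -> series_sum u = l.
Proof.
  intro H. unfold series_sum.
  apply (uniqueness_sum u); [apply epsilon_spec; exists l|]; exact H.
Qed.

Lemma Rint_average_bound (f : R -> R) (lo np c v : R) :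
  C_rho f -> 0 <= lo -> 0 < np ->
  (forall t, lo < t < lo + / np -> Rabs (f t - v) <= c) ->
  Rabs (np * Rint f lo (lo + / np) - v) <= c.
Proof.
  intros Hf Hlo Hnp Hb.
  pose proof (Rinv_0_lt_compat _ Hnp).
  pose proof (C_rho_Riemann_integrable f lo (lo + / np) Hf Hlo ltac:(lra)) as pr.
  rewrite (Rint_RiemannInt f lo (lo + / np) pr).
  assert (HU : RiemannInt pr <= RiemannInt (RiemannInt_P14 lo (lo + / np) (v + c))).
  { apply RiemannInt_P19; [lra|]. intros t Ht. unfold fct_cte.
    specialize (Hb t Ht). apply Rabs_le_between in Hb. lra. }
  assert (HL : RiemannInt (RiemannInt_P14 lo (lo + / np) (v - c)) <= RiemannInt pr).
  { apply RiemannInt_P19; [lra|]. intros t Ht. unfold fct_cte.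
    specialize (Hb t Ht). apply Rabs_le_between in Hb. lra. }
  rewrite (RiemannInt_const (v + c)) in HU. rewrite (RiemannInt_const (v - c)) in HL.
  replace (lo + / np - lo) with (/ np) in HU, HL by ring.
  apply Rabs_le_between. split.
  - apply Rmult_le_compat_l with (r := np) in HL; [|lra].
    replace (np * ((v - c) * / np)) with (v - c) in HL by (field; lra). lra.
  - apply Rmult_le_compat_l with (r := np) in HU; [|lra].
    replace (np * ((v + c) * / np)) with (v + c) in HU by (field; lra). lra.
Qed.

Definition quartic_weight (np v : R) : R := 9 * v ^ 2 / np + 27 * v ^ 4 / np ^ 3.

Lemma sqr_sum3_le (D E F : R) : (D + E + F) ^ 2 <= 3 * (D ^ 2 + E ^ 2 + F ^ 2).
Proof.
  pose proof (pow2_ge_0 (D - E)). pose proof (pow2_ge_0 (E - F)).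
  pose proof (pow2_ge_0 (D - F)). nra.
Qed.

Lemma kernel_split_bound (np u D E F G : R) :
  1 <= np -> np * u = D + E + F -> Rabs F <= G ->
  (2 + np * u ^ 2) * (1 + u ^ 2)
    <= 2 + quartic_weight np G + quartic_weight np D + quartic_weight np E.
Proof.
  intros Hn HU HF. unfold quartic_weight.
  set (U := np * u) in *.
  set (iv := / np).
  assert (Hiv : 0 < iv <= 1).
  { split; [apply Rinv_0_lt_compat; lra|].
    unfold iv. rewrite <- Rinv_1. apply Rinv_le_contravar; lra. }
  assert (HF2 : F ^ 2 <= G ^ 2).
  { pose proof (Rabs_pos F). rewrite <- (pow2_abs F). apply pow_incr. lra. }
  assert (HU2 : U ^ 2 <= 3 * (D ^ 2 + E ^ 2 + G ^ 2)).
  { rewrite HU. pose proof (sqr_sum3_le D E F). lra. }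
  assert (HU4 : U ^ 4 <= 27 * (D ^ 4 + E ^ 4 + G ^ 4)).
  { assert (HF4 : F ^ 4 <= G ^ 4).
    { replace (F ^ 4) with ((F ^ 2) ^ 2) by ring.
      replace (G ^ 4) with ((G ^ 2) ^ 2) by ring.
      apply pow_incr. split; [apply pow2_ge_0 | lra]. }
    assert (U ^ 4 <= (3 * (D ^ 2 + E ^ 2 + F ^ 2)) ^ 2).
    { replace (U ^ 4) with ((U ^ 2) ^ 2) by ring.
      apply pow_incr. split; [apply pow2_ge_0|]. rewrite HU. apply sqr_sum3_le. }
    pose proof (sqr_sum3_le (D ^ 2) (E ^ 2) (F ^ 2)).
    replace ((3 * (D ^ 2 + E ^ 2 + F ^ 2)) ^ 2)
      with (9 * (D ^ 2 + E ^ 2 + F ^ 2) ^ 2) in * by ring.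
    replace ((D ^ 2) ^ 2) with (D ^ 4) in * by ring.
    replace ((E ^ 2) ^ 2) with (E ^ 4) in * by ring.
    replace ((F ^ 2) ^ 2) with (F ^ 4) in * by ring.
    lra. }
  replace ((2 + np * u ^ 2) * (1 + u ^ 2))
    with (2 + 2 * U ^ 2 * iv ^ 2 + U ^ 2 * iv + U ^ 4 * iv ^ 3)
    by (unfold U, iv; field; lra).
  replace (2 + (9 * G ^ 2 / np + 27 * G ^ 4 / np ^ 3) + (9 * D ^ 2 / np + 27 * D ^ 4 / np ^ 3)
             + (9 * E ^ 2 / np + 27 * E ^ 4 / np ^ 3))
    with (2 + 9 * (D ^ 2 + E ^ 2 + G ^ 2) * iv + 27 * (D ^ 4 + E ^ 4 + G ^ 4) * iv ^ 3)
    by (unfold iv; field; lra).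
  pose proof (pow2_ge_0 U).
  assert (U ^ 2 * iv ^ 2 <= U ^ 2 * iv) by (apply Rmult_le_compat_l; nra).
  assert (U ^ 2 * iv <= 3 * (D ^ 2 + E ^ 2 + G ^ 2) * iv) by (apply Rmult_le_compat_r; lra).
  assert (U ^ 4 * iv ^ 3 <= 27 * (D ^ 4 + E ^ 4 + G ^ 4) * iv ^ 3)
    by (apply Rmult_le_compat_r; [apply pow_le; lra | exact HU4]).
  lra.
Qed.

Lemma Rdiv_le_self (v d : R) : 0 <= v -> 1 <= d -> v / d <= v.
Proof.
  intros Hv Hd. apply Rmult_le_reg_r with d; [lra|].
  unfold Rdiv. rewrite Rmult_assoc, Rinv_l by lra. nra.
Qed.

Lemma pow3_ge1 (d : R) : 1 <= d -> 1 <= d ^ 3.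
Proof. intro Hd. replace 1 with (1 ^ 3) by ring. apply pow_incr; lra. Qed.

Lemma shift_moment_bound (al be x np : R) :
  0 <= al -> 0 <= be -> 0 <= x -> 1 <= np ->
  let cG := 2 * ((al + 1) ^ 2 + be ^ 2) in
  quartic_weight np (al + 1 + be * x) <= (9 * cG + 27 * cG ^ 2) * (1 + x ^ 2) ^ 2.
Proof.
  intros Hal Hbe Hx Hn cG. unfold quartic_weight.
  set (G := al + 1 + be * x). set (X := 1 + x ^ 2).
  assert (HX : 1 <= X) by (unfold X; pose proof (pow2_ge_0 x); lra).
  assert (HcG : 0 <= cG) by (unfold cG; pose proof (pow2_ge_0 (al + 1)); pose proof (pow2_ge_0 be); lra).
  assert (HG2 : G ^ 2 <= cG * X).
  { unfold G, cG, X. pose proof (pow2_ge_0 (al + 1 - be * x)).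
    pose proof (pow2_ge_0 ((al + 1) * x)). pose proof (pow2_ge_0 (be * x)).
    pose proof (pow2_ge_0 be). nra. }
  assert (HG4 : G ^ 4 <= cG ^ 2 * X ^ 2).
  { replace (G ^ 4) with ((G ^ 2) ^ 2) by ring. rewrite <- Rpow_mult_distr.
    apply pow_incr. split; [apply pow2_ge_0 | exact HG2]. }
  assert (9 * G ^ 2 / np <= 9 * G ^ 2) by (apply Rdiv_le_self; [pose proof (pow2_ge_0 G); lra | lra]).
  assert (27 * G ^ 4 / np ^ 3 <= 27 * G ^ 4).
  { apply Rdiv_le_self; [|apply pow3_ge1, Hn].
    assert (0 <= G ^ 4) by (replace (G ^ 4) with ((G ^ 2) ^ 2) by ring; apply pow2_ge_0). lra. }
  assert (cG * X <= cG * X ^ 2) by (apply Rmult_le_compat_l; nra).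
  lra.
Qed.

Lemma nb_moment_bound (nR x np : R) : 1 <= nR <= np -> 0 <= x ->
  9 * (nR * x * (1 + x)) / np + 27 * nb_central_moment4 nR x / np ^ 3
    <= (18 + 27 * 38) * (1 + x ^ 2) ^ 2.
Proof.
  intros [Hn1 Hn2] Hx.
  set (p := nR / np). set (iv := / np). set (y0 := x * (1 + x)). set (X := 1 + x ^ 2).
  assert (Hp : 0 <= p <= 1).
  { unfold p. split; [apply Rdiv_le_0_compat; lra|].
    apply Rmult_le_reg_r with np; [lra|]. field_simplify; lra. }
  assert (Hiv : 0 <= iv <= 1).
  { split; [left; apply Rinv_0_lt_compat; lra|].
    unfold iv. rewrite <- Rinv_1. apply Rinv_le_contravar; lra. }
  assert (Hy0 : 0 <= y0 <= 2 * X) by (unfold y0, X; split; nra).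
  replace (9 * (nR * x * (1 + x)) / np + 27 * nb_central_moment4 nR x / np ^ 3)
    with (9 * (p * y0) + 27 * (3 * (p * p * iv) * y0 ^ 2 + (p * iv * iv) * (y0 * (1 + 6 * y0))))
    by (unfold p, iv, y0, nb_central_moment4; field; lra).
  assert (0 <= p * p <= 1) by (split; nra).
  assert (0 <= p * iv <= 1) by (split; nra).
  assert (0 <= p * p * iv <= 1) by (split; nra).
  assert (0 <= p * iv * iv <= 1) by (split; nra).
  assert (p * y0 <= 2 * X) by nra.
  assert (X <= X ^ 2) by (unfold X; pose proof (pow2_ge_0 x); nra).
  assert (Hy2 : y0 ^ 2 <= 4 * X ^ 2).
  { replace (4 * X ^ 2) with ((2 * X) ^ 2) by ring. apply pow_incr; lra. }
  assert (Hy4 : y0 * (1 + 6 * y0) <= 26 * X ^ 2).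
  { assert (y0 * (1 + 6 * y0) <= 2 * X * (1 + 12 * X)) by (apply Rmult_le_compat; lra).
    nra. }
  assert (p * p * iv * y0 ^ 2 <= 4 * X ^ 2).
  { pose proof (pow2_ge_0 y0). nra. }
  assert (p * iv * iv * (y0 * (1 + 6 * y0)) <= 26 * X ^ 2).
  { assert (0 <= y0 * (1 + 6 * y0)) by nra. nra. }
  nra.
Qed.

Lemma poisson_moment_bound (lam a np : R) : 0 <= lam <= a -> 1 <= np ->
  9 * (lam ^ 2 + lam) / np + 27 * (lam ^ 4 + 6 * lam ^ 3 + 7 * lam ^ 2 + lam) / np ^ 3
    <= 9 * (a ^ 2 + a) + 27 * (a ^ 4 + 6 * a ^ 3 + 7 * a ^ 2 + a).
Proof.
  intros [Hl Hla] Hn.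
  assert (lam ^ 2 <= a ^ 2) by (apply pow_incr; lra).
  assert (lam ^ 3 <= a ^ 3) by (apply pow_incr; lra).
  assert (lam ^ 4 <= a ^ 4) by (apply pow_incr; lra).
  pose proof (pow_le lam 2 Hl). pose proof (pow_le lam 3 Hl). pose proof (pow_le lam 4 Hl).
  assert (9 * (lam ^ 2 + lam) / np <= 9 * (lam ^ 2 + lam)) by (apply Rdiv_le_self; lra).
  assert (27 * (lam ^ 4 + 6 * lam ^ 3 + 7 * lam ^ 2 + lam) / np ^ 3
          <= 27 * (lam ^ 4 + 6 * lam ^ 3 + 7 * lam ^ 2 + lam))
    by (apply Rdiv_le_self; [lra | apply pow3_ge1, Hn]).
  lra.
Qed.

Definition moment_constant (a al be : R) : R :=
  let cG := 2 * ((al + 1) ^ 2 + be ^ 2) in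
  2 + (9 * cG + 27 * cG ^ 2) + (18 + 27 * 38)
  + (9 * (a ^ 2 + a) + 27 * (a ^ 4 + 6 * a ^ 3 + 7 * a ^ 2 + a)).

Lemma moment_constant_pos (a al be : R) : 0 <= a -> 0 < moment_constant a al be.
Proof.
  intro Ha. unfold moment_constant.
  pose proof (pow2_ge_0 (al + 1)). pose proof (pow2_ge_0 be).
  pose proof (pow2_ge_0 (2 * ((al + 1) ^ 2 + be ^ 2))).
  pose proof (pow_le a 2 Ha). pose proof (pow_le a 3 Ha). pose proof (pow_le a 4 Ha).
  lra.
Qed.

Lemma moment_sum_bound (nR x np lam a al be : R) :
  1 <= nR <= np -> 0 <= x -> 0 <= al -> 0 <= be -> 0 <= lam <= a ->
  2 + quartic_weight np (al + 1 + be * x)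
  + (9 * (nR * x * (1 + x)) / np + 27 * nb_central_moment4 nR x / np ^ 3)
  + (9 * (lam ^ 2 + lam) / np
     + 27 * (lam ^ 4 + 6 * lam ^ 3 + 7 * lam ^ 2 + lam) / np ^ 3)
  <= moment_constant a al be * (1 + x ^ 2) ^ 2.
Proof.
  intros Hn Hx Hal Hbe Hlam.
  pose proof (shift_moment_bound al be x np Hal Hbe Hx ltac:(lra)) as HG.
  pose proof (nb_moment_bound nR x np Hn Hx) as HN.
  pose proof (poisson_moment_bound lam a np Hlam ltac:(lra)) as HP.
  assert (HX : 1 <= (1 + x ^ 2) ^ 2).
  { pose proof (pow2_ge_0 x). replace 1 with (1 ^ 2) at 1 by ring. apply pow_incr; lra. }
  set (Pa := 9 * (a ^ 2 + a) + 27 * (a ^ 4 + 6 * a ^ 3 + 7 * a ^ 2 + a)) in *.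
  assert (Pa <= Pa * (1 + x ^ 2) ^ 2).
  { assert (0 <= Pa).
    { destruct Hlam. unfold Pa. pose proof (pow_le a 2 ltac:(lra)).
      pose proof (pow_le a 3 ltac:(lra)). pose proof (pow_le a 4 ltac:(lra)). lra. }
    nra. }
  unfold moment_constant. cbv zeta. fold Pa. lra.
Qed.

Lemma is_series_dominated (u b : nat -> R) (l : R) :
  (forall k, Rabs (u k) <= b k) -> is_series b l ->
  ex_series u /\ Rabs (Series u) <= l.
Proof.
  intros Hub Hb.
  assert (Hex : ex_series b) by (exists l; exact Hb).
  assert (Habs : ex_series (fun k => Rabs (u k))).
  { apply (@ex_series_le R_AbsRing R_CompleteNormedModule _ b); [|exact Hex].
    intro k. change (Rabs (Rabs (u k)) <= b k). rewrite Rabs_Rabsolu. apply Hub. }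
  split.
  - apply (@ex_series_le R_AbsRing R_CompleteNormedModule _ b); [exact Hub | exact Hex].
  - eapply Rle_trans; [apply Series_Rabs, Habs|].
    rewrite <- (is_series_unique _ _ Hb).
    apply Series_le; [|exact Hex]. intro k; split; [apply Rabs_pos | apply Hub].
Qed.

Section Error_estimate.

Variables (a alpha beta : R) (f : R -> R) (n : nat) (x : R).
Hypotheses (ha : 0 <= a) (halpha : 0 <= alpha) (hab : alpha <= beta)
  (hf : C_rho f) (hn : (1 <= n)%nat) (hx : 0 <= x).

Let np := INR n + beta.
Let lam := a * baskakov_ratio x.
Let c := 4 * (1 + x ^ 2) * Omega f (/ sqrt np).
Let err (k : nat) := np * Rint f ((INR k + alpha) / np) ((INR k + alpha + 1) / np) - f x.
Let shift_weight := quartic_weight np (alpha + 1 + beta * x).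
Let kernel_bound (i j : nat) :=
  2 + shift_weight + quartic_weight np (INR i - INR n * x) + quartic_weight np (INR j).
Let V (k : nat) := sum_f_R0 (fun i => nb_weight n x i * poisson_weight lam (k - i)
                                      * kernel_bound i (k - i)%nat) k.

Lemma np_ge_1 : 1 <= np.
Proof.
  assert (1 <= INR n) by (replace 1 with (INR 1) by reflexivity; apply le_INR, hn).
  unfold np. lra.
Qed.

Lemma lam_bounds : 0 <= lam <= a.
Proof. pose proof (baskakov_ratio_bounds x hx). unfold lam. split; nra. Qed.

Lemma c_nonneg : 0 <= c.
Proof.
  pose proof np_ge_1. pose proof (pow2_ge_0 x).
  assert (0 <= Omega f (/ sqrt np)) by (apply Omega_nonneg; [exact hf|];
    apply Rinv_0_lt_compat, sqrt_lt_R0; lra).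
  unfold c. repeat apply Rmult_le_pos; lra.
Qed.

(* For t in the k-th interval, np (t - x) = (i - n x) + (k - i) + (np t - k - beta x),
   and the last term lies in [alpha - beta x, alpha + 1]. *)
Lemma err_bound (k i : nat) : (i <= k)%nat -> Rabs (err k) <= c * kernel_bound i (k - i).
Proof.
  intro Hik. pose proof np_ge_1. pose proof (pos_INR k).
  assert (Hlo : 0 <= (INR k + alpha) / np) by (apply Rdiv_le_0_compat; lra).
  unfold err.
  replace ((INR k + alpha + 1) / np) with ((INR k + alpha) / np + / np) by (field; lra).
  apply Rint_average_bound; [exact hf | exact Hlo | lra |].
  intros t [Ht1 Ht2].
  assert (Hnt : INR k + alpha < np * t < INR k + alpha + 1).
  { split.
    - apply Rmult_lt_compat_l with (r := np) in Ht1; [|lra].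
      replace (np * ((INR k + alpha) / np)) with (INR k + alpha) in Ht1 by (field; lra).
      exact Ht1.
    - apply Rmult_lt_compat_l with (r := np) in Ht2; [|lra].
      replace (np * ((INR k + alpha) / np + / np)) with (INR k + alpha + 1) in Ht2
        by (field; lra).
      exact Ht2. }
  eapply Rle_trans; [apply (modulus_bound f np x t hf np_ge_1 hx); lra|].
  rewrite Rmult_assoc. apply Rmult_le_compat_l; [exact c_nonneg|].
  apply kernel_split_bound with (np * t - INR k - beta * x); [lra| |].
  - rewrite (minus_INR k i Hik). unfold np. ring.
  - assert (0 <= beta * x) by nra. apply Rabs_le. lra.
Qed.

Lemma W_err_bound (k : nat) : Rabs (W n k a x * err k) <= c * V k.
Proof.
  rewrite (W_convolution n k a x hx). fold lam.
  rewrite Rmult_comm, scal_sum.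
  eapply Rle_trans; [apply Rsum_abs|].
  unfold V. rewrite scal_sum. apply sum_Rle. intros i Hi.
  assert (Hw : 0 <= nb_weight n x i * poisson_weight lam (k - i)).
  { apply Rmult_le_pos; [apply nb_weight_nonneg, hx|].
    apply poisson_weight_nonneg, lam_bounds. }
  rewrite Rabs_mult, (Rabs_pos_eq _ Hw).
  set (w := nb_weight n x i * poisson_weight lam (k - i)) in *.
  replace (w * kernel_bound i (k - i)%nat * c) with (w * (c * kernel_bound i (k - i)%nat))
    by ring.
  apply Rmult_le_compat_l; [exact Hw | apply err_bound, Hi].
Qed.

Lemma V_series :
  is_series V
    (2 + shift_weight + (9 * (INR n * x * (1 + x)) / np + 27 * nb_central_moment4 (INR n) x / np ^ 3)
     + (9 * (lam ^ 2 + lam) / np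
        + 27 * (lam ^ 4 + 6 * lam ^ 3 + 7 * lam ^ 2 + lam) / np ^ 3)).
Proof.
  pose proof np_ge_1 as Hnp. pose proof lam_bounds.
  assert (Hq : forall v, 0 <= quartic_weight np v).
  { intro v. unfold quartic_weight. pose proof (pow2_ge_0 v).
    assert (0 <= v ^ 4) by (replace (v ^ 4) with ((v ^ 2) ^ 2) by ring; apply pow2_ge_0).
    pose proof (pow3_ge1 np Hnp).
    apply Rplus_le_le_0_compat; apply Rdiv_le_0_compat; lra. }
  destruct (nb_central_moments n x hx hn) as [N2 N4].
  destruct (poisson_moments lam) as [P2 P4].
  apply (is_series_convolution_split (nb_weight n x) (poisson_weight lam)
           (fun i => quartic_weight np (INR i - INR n * x))
           (fun j => quartic_weight np (INR j))).
  - intro; apply nb_weight_nonneg, hx.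
  - intro; apply poisson_weight_nonneg; lra.
  - intro; apply Hq.
  - intro; apply Hq.
  - apply nb_weight_series; [exact hx | exact hn].
  - apply poisson_weight_series.
  - refine (is_series_ext_eq _ _ _ _ _ _
              (is_series_Rplus _ _ _ _ (is_series_Rmult_l (9 / np) _ _ N2)
                 (is_series_Rmult_l (27 / np ^ 3) _ _ N4)));
      [intro i; unfold quartic_weight | ]; unfold Rdiv; ring.
  - refine (is_series_ext_eq _ _ _ _ _ _
              (is_series_Rplus _ _ _ _ (is_series_Rmult_l (9 / np) _ _ P2)
                 (is_series_Rmult_l (27 / np ^ 3) _ _ P4)));
      [intro j; unfold quartic_weight | ]; unfold Rdiv; ring.
Qed.

Lemma T_error_bound :
  Rabs (T n a alpha beta f x - f x)
    <= c * (2 + shift_weight + (9 * (INR n * x * (1 + x)) / np + 27 * nb_central_moment4 (INR n) x / np ^ 3)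
            + (9 * (lam ^ 2 + lam) / np
               + 27 * (lam ^ 4 + 6 * lam ^ 3 + 7 * lam ^ 2 + lam) / np ^ 3)).
Proof.
  pose proof np_ge_1.
  destruct (is_series_dominated (fun k => W n k a x * err k) _ _ W_err_bound
              (is_series_Rmult_l c _ _ V_series)) as [Hex HS].
  set (S := Series (fun k => W n k a x * err k)) in HS.
  assert (Hsum : is_series (fun k => W n k a x * Rint f ((INR k + alpha) / np)
                                               ((INR k + alpha + 1) / np)) ((S + f x) / np)).
  { refine (is_series_ext_eq _ _ _ _ _ _
              (is_series_Rmult_l (/ np) _ _
                 (is_series_Rplus _ _ _ _ (Series_correct _ Hex)
                    (is_series_Rmult_l (f x) _ _ (W_series n a x hx ha hn))))).
    - intro k. unfold err. field. lra.
    - fold S. field. lra. }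
  replace (T n a alpha beta f x) with (S + f x); [replace (S + f x - f x) with S by ring; exact HS|].
  unfold T. fold np. rewrite (series_sum_unique _ ((S + f x) / np)).
  - field. lra.
  - apply is_series_Reals, Hsum.
Qed.

End Error_estimate.

Theorem theorem4p3 (a alpha beta : R) (ha : 0 <= a) (halpha : 0 <= alpha)
  (hab : alpha <= beta) :
  exists M : R, M > 0 /\
    forall (f : R -> R), C_rho_k f ->
    forall n : nat, (1 <= n)%nat ->
    forall x : R, 0 <= x ->
      Rabs (T n a alpha beta f x - f x) / (1 + x ^ 2) ^ 3
      <= M * Omega f (/ sqrt (INR n + beta)).
Proof.
  exists (4 * moment_constant a alpha beta).
  split; [pose proof (moment_constant_pos a alpha beta ha); lra|].
  intros f [hf _] n hn x hx.
  pose proof (T_error_bound a alpha beta f n x ha halpha hab hf hn hx) as HT.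
  pose proof (c_nonneg alpha beta f n x halpha hab hf hn) as Hc.
  assert (HnR : 1 <= INR n <= INR n + beta).
  { split; [replace 1 with (INR 1) by reflexivity; apply le_INR, hn | lra]. }
  pose proof (moment_sum_bound (INR n) x (INR n + beta) (a * baskakov_ratio x) a alpha beta
                HnR hx halpha ltac:(lra) (lam_bounds a x ha hx)) as HM.
  assert (HX : 0 < (1 + x ^ 2) ^ 3) by (apply pow_lt; pose proof (pow2_ge_0 x); lra).
  apply Rmult_le_reg_r with ((1 + x ^ 2) ^ 3); [exact HX|].
  unfold Rdiv. rewrite Rmult_assoc, Rinv_l, Rmult_1_r by lra.
  eapply Rle_trans; [exact HT|].
  replace (4 * moment_constant a alpha beta * Omega f (/ sqrt (INR n + beta)) * (1 + x ^ 2) ^ 3)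
    with (4 * (1 + x ^ 2) * Omega f (/ sqrt (INR n + beta))
          * (moment_constant a alpha beta * (1 + x ^ 2) ^ 2)) by ring.
  apply Rmult_le_compat_l; [exact Hc | exact HM].
Qed.
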